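(* Every nonempty tiling $T$ contains a dense triple, i.e. a triple of the form $(j-1)\,j\,(j+1)$ for some $2\le j\le n-1$.
   Context: Fix an integer $n\ge 3$ and write $[n]=\{1,\dots,n\}$. Let $\Lambda$ be the set of 3-element subsets of $[n]$; a triple $\{i,j,k\}$ with $i<j<k$ is written $ijk$. For a 4-element subset $F=\{i<j<k<l\}$ of $[n]$, the stick of $F$ is the sequence $(ijk,\ ijl,\ ikl,\ jkl)$. A tiling (the inversion set of a rhombus tiling of the zonogon $Z(n;2)$) is a subset $T\subseteq\Lambda$ such that for every 4-element $F\subseteq[n]$, $T\cap\mathrm{stick}(F)$ is an initial segment or a final segment of the stick (empty set and whole stick allowed). *)

From mathcomp Require Import all_boot.
Set Implicit Arguments. Unset Strict Implicit. Unset Printing Implicit Defensive.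

(* A triple ijk with i<j<k is encoded as (i, j, k) : nat * nat * nat. *)
Definition triple := (nat * nat * nat)%type.

Definition in_Lambda (n : nat) (t : triple) : bool :=
  let: (i, j, k) := t in [&& 1 <= i, i < j, j < k & k <= n].

Definition stick (i j k l : nat) : seq triple :=
  [:: (i, j, k); (i, j, l); (i, k, l); (j, k, l)].

Definition init_or_final_segment (T : pred triple) (s : seq triple) : Prop :=
  exists m, m <= size s /\
    ((forall p, p < size s -> (nth (0,0,0) s p \in T) = (p < m)) \/
     (forall p, p < size s -> (nth (0,0,0) s p \in T) = (m <= p))).

Definition tiling (n : nat) (T : pred triple) : Prop :=
  (forall t, t \in T -> in_Lambda n t) /\
  (forall i j k l, 1 <= i -> i < j -> j < k -> k < l -> l <= n ->
     init_or_final_segment T (stick i j k l)).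

(* A triple ijk of T that is not dense (k - i > 2) is an interior entry of a
   stick whose first and last entries are strictly narrower triples: take
   stick(i, i+1, j, k) if j > i+1 and stick(i, j, j+1, k) otherwise.  Since T
   meets every stick in an initial or final segment, one of the two end
   entries lies in T as well.  Descending on the width k - i must end at a
   triple of width 2, which is dense. *)

From mathcomp Require Import all_boot.
From mathcomp Require Import zify.

Lemma init_or_final_segment_ends (T : pred triple) (s : seq triple) :
  init_or_final_segment T s -> has (mem T) s ->
  head (0, 0, 0) s \in T \/ last (0, 0, 0) s \in T.
Proof.
case=> m [_ seg] /(has_nthP (0, 0, 0)) [q lt_q_s Tq].
have {Tq} : nth (0, 0, 0) s q \in T := Tq.
rewrite -nth0 -nth_last; move: lt_q_s; case: (size s) seg => // sz seg lt_q_sz.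
by case: seg => seg; rewrite !seg //; lia.
Qed.

Section Tiling.

Set Implicit Arguments.

Context {n : nat} {T : pred triple}.
Hypothesis tilT : tiling n T.

Lemma tiling_stick_ends i j k l :
  1 <= i -> i < j -> j < k -> k < l -> l <= n ->
  has (mem T) (stick i j k l) -> (i, j, k) \in T \/ (j, k, l) \in T.
Proof.
move=> i_pos lt_ij lt_jk lt_kl l_le_n.
exact/init_or_final_segment_ends/tilT.2.
Qed.

Lemma tiling_narrower_triple i j k :
  (i, j, k) \in T -> 2 < k - i ->
  exists i' j' k', (i', j', k') \in T /\ k' - i' < k - i.
Proof.
move=> Tijk wide.
have /and4P[i_pos lt_ij lt_jk k_le_n] := tilT.1 _ Tijk.
have [lt_i1_j|j_eq] : i.+1 < j \/ j = i.+1 by lia.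
- have [Tl|Tr] : (i, i.+1, j) \in T \/ (i.+1, j, k) \in T.
    by apply: tiling_stick_ends => //=; rewrite Tijk !orbT.
  + by exists i, i.+1, j; split=> //; lia.
  + by exists i.+1, j, k; split=> //; lia.
- subst j.
  have [Tl|Tr] : (i, i.+1, i.+2) \in T \/ (i.+1, i.+2, k) \in T.
    by apply: tiling_stick_ends => //=; rewrite ?Tijk ?orbT //; lia.
  + by exists i, i.+1, i.+2; split=> //; lia.
  + by exists i.+1, i.+2, k; split=> //; lia.
Qed.

Lemma tiling_dense_triple :
  (exists t, t \in T) ->
  exists j, [/\ 2 <= j, j <= n.-1 & (j.-1, j, j.+1) \in T].
Proof.
case=> [[[i j] k]]; have [w] := ubnP (k - i).
elim: w i j k => // w IH i j k lt_w Tijk.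
have /and4P[i_pos lt_ij lt_jk k_le_n] := tilT.1 _ Tijk.
have [wide|narrow] := ltnP 2 (k - i).
- have [i' [j' [k' [Tijk' narrower]]]] := tiling_narrower_triple Tijk wide.
  by apply: (IH i' j' k') => //; lia.
- exists j; split; [lia | lia |].
  have -> : j.-1 = i by lia.
  by have -> : j.+1 = k by lia.
Qed.

End Tiling.

Theorem lemma3 (n : nat) (T : pred triple) :
  3 <= n -> tiling n T -> (exists t, t \in T) ->
  exists j, [/\ 2 <= j, j <= n.-1 & (j.-1, j, j.+1) \in T].
Proof.
by move=> _ tilT; apply: tiling_dense_triple.
Qed.
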